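(* Let $\mathcal{X}\subseteq\mathbb{R}^d$ and let $\mathcal{P}$ be a class of distributions of finite point processes on $\mathcal{X}$. Each $Q\in\mathcal{P}$ is identified with its decomposition into $(\Pi_k^Q)_{k\in\mathbb{N}}$ and $(p_k^Q)_{k\in\mathbb{N}_0}$. Set $\mathcal{F}_k:=\{\Pi_k^Q\mid Q\in\mathcal{P}\}$ and for every $k\in\mathbb{N}$ let $S_k:\mathcal{F}_k\times\mathcal{X}^k\to\mathbb{R}$ be a symmetric (strictly) consistent scoring function for the identity functional $\mathrm{id}_{\mathcal{F}_k}$. Let $S_0$ be a (strictly) consistent scoring function for distributions on $\mathbb{N}_0$ (i.e. for the identity functional on $\{(p_k^Q)_{k\in\mathbb{N}_0}\mid Q\in\mathcal{P}\}$). Define $S:\mathcal{P}\times\mathbb{M}_0\to\mathbb{R}$ by $$S\big(((\Pi_k^Q)_{k\in\mathbb{N}},(p_k^Q)_{k\in\mathbb{N}_0}),\{y_1,\dots,y_n\}\big)=S_n(\Pi_n^Q,y_1,\dots,y_n)+S_0\big((p_k^Q)_{k\in\mathbb{N}_0},n\big)$$ for $n\in\mathbb{N}$, and $S\big(((\Pi_k^Q)_{k},(p_k^Q)_{k}),\emptyset\big):=S_0\big((p_k^Q)_{k\in\mathbb{N}_0},0\big)$. Then $S$ is a consistent scoring function for the distribution of the point process (i.e. for the identity functional on $\mathcal{P}$). It is strictly consistent if $S_0$ and all $S_k$, $k\in\mathbb{N}$, are strictly consistent.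
   Context: $\mathbb{M}_0=\mathbb{M}_0(\mathcal{X})$ is the space of finite counting measures on $\mathcal{X}$; a realization $\varphi=\sum_{i=1}^n\delta_{y_i}$ is written as the set $\{y_1,\dots,y_n\}$ (empty if $n=0$). The law of a finite point process is equivalently given by $(p_k)_{k\in\mathbb{N}_0}$, where $p_k$ is the probability of exactly $k$ points, and $(\Pi_k)_{k\in\mathbb{N}}$, where $\Pi_k$ is a symmetric probability measure on $\mathcal{X}^k$ describing the distribution of the points (in any ordering) given that $k$ points occur. A scoring function $S:\mathsf{A}\times\mathsf{O}\to\mathbb{R}$ for a functional $T:\mathcal{F}\to\mathsf{A}$ (where $\mathcal{F}$ is a class of distributions on $\mathsf{O}$) requires $S(a,\cdot)$ to be $F$-integrable for all $a\in\mathsf{A}$, $F\in\mathcal{F}$; it is consistent if $\int S(a,y)\,dF(y)\ge\int S(T(F),y)\,dF(y)$ for all $a\in\mathsf{A}$, $F\in\mathcal{F}$, and strictly consistent if in addition equality implies $a=T(F)$. $S:\mathsf{A}\times\mathcal{X}^n\to\mathbb{R}$ is symmetric if $S(a,y_1,\dots,y_n)=S(a,y_{\pi(1)},\dots,y_{\pi(n)})$ for all $a$, $y$ and permutations $\pi$.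
   Formalization: The Q-integrability of S(a,·) for all a, Q ∈ 𝒫, that is, that S is a scoring function, is a hypothesis rather than part of the conclusion. The statement above fails without it. *)

From HB Require Import structures.
From mathcomp Require Import all_boot all_order all_algebra all_fingroup.
From mathcomp Require Import all_classical all_reals all_analysis measurable_realfun.
Set Implicit Arguments. Unset Strict Implicit. Unset Printing Implicit Defensive.
Import Order.TTheory GRing.Theory Num.Theory.
Local Open Scope classical_set_scope.
Local Open Scope ring_scope.
Local Open Scope ereal_scope.

Section ScoringDefs.
Context {R : realType}.

Definition perm_tuple (T : Type) (k : nat) (s : 'S_k) (y : k.-tuple T) : k.-tuple T :=
  [tuple tnth y (s i) | i < k].

Definition sym_prob d (T : measurableType d) (k : nat) (P : probability (k.-tuple T) R) :=
  forall (s : 'S_k) (A : set (k.-tuple T)), measurable A ->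
    P (perm_tuple s @^-1` A) = P A.

Definition symmetric_score (A T : Type) (k : nat) (S : A -> k.-tuple T -> R) :=
  forall (a : A) (s : 'S_k) (y : k.-tuple T), S a (perm_tuple s y) = S a y.

(** Scoring functions for the identity functional on a class F of
    distributions on T (so the action space is F itself). *)
Definition is_scoring d (T : measurableType d) (F : set (probability T R))
    (S : probability T R -> T -> R) :=
  forall a Q, F a -> F Q -> Q.-integrable setT (fun x => (S a x)%:E).

Definition consistent d (T : measurableType d) (F : set (probability T R))
    (S : probability T R -> T -> R) :=
  is_scoring F S /\
  forall a Q, F a -> F Q ->
    \int[Q]_x (S Q x)%:E <= \int[Q]_x (S a x)%:E.

Definition strictly_consistent d (T : measurableType d) (F : set (probability T R))
    (S : probability T R -> T -> R) :=
  consistent F S /\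
  forall a Q, F a -> F Q ->
    \int[Q]_x (S a x)%:E = \int[Q]_x (S Q x)%:E -> a = Q.

(** Distribution of a finite point process with points in T, given by its
    decomposition: the law (p_k)_k of the number of points (a probability
    on N_0) and the laws Pi_k of the points given that k points occur. *)
Record ppdist d (T : measurableType d) := PPDist {
  pp_count : probability nat R;
  pp_pts : forall k : nat, probability (k.-tuple T) R }.

Definition pp_on d (T : measurableType d) (X : set T) (Q : ppdist T) :=
  forall k : nat, sym_prob (pp_pts Q k) /\
     pp_pts Q k [set y | forall i, X (tnth y i)] = 1.

(** Realizations {y_1,...,y_n} of the process are represented by (n, y) with
    y an n-tuple (any ordering); functions of realizations are families
    f n : n.-tuple T -> \bar R. *)
Definition pp_term d (T : measurableType d) (Q : ppdist T)
    (f : forall n : nat, n.-tuple T -> \bar R) (n : nat) : \bar R :=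
  pp_count Q [set n] * integral (pp_pts Q n) setT (f n).

Definition pp_expect d (T : measurableType d) (Q : ppdist T)
    (f : forall n : nat, n.-tuple T -> \bar R) : \bar R :=
  \sum_(0 <= n <oo) pp_term Q f n.

Definition pp_integrable d (T : measurableType d) (Q : ppdist T)
    (f : forall n : nat, n.-tuple T -> \bar R) :=
  (forall n : nat, measurable_fun [set: n.-tuple T] (f n)) /\
  pp_expect Q (fun n y => `|f n y|) < +oo.

(** two decompositions describing the same law of the point process
    (Pi_k is irrelevant when p_k = 0) *)
Definition same_law d (T : measurableType d) (Q Q' : ppdist T) :=
  pp_count Q = pp_count Q' /\
  forall k : nat, (0 < k)%N -> (0 < pp_count Q [set k])%E -> pp_pts Q k = pp_pts Q' k.

Definition pp_scoring d (T : measurableType d) (P : set (ppdist T))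
    (S : ppdist T -> forall n : nat, n.-tuple T -> R) :=
  forall a Q, P a -> P Q -> pp_integrable Q (fun n y => (S a n y)%:E).

Definition pp_consistent d (T : measurableType d) (P : set (ppdist T))
    (S : ppdist T -> forall n : nat, n.-tuple T -> R) :=
  pp_scoring P S /\
  forall a Q, P a -> P Q ->
    pp_expect Q (fun n y => (S Q n y)%:E) <= pp_expect Q (fun n y => (S a n y)%:E).

Definition pp_strictly_consistent d (T : measurableType d) (P : set (ppdist T))
    (S : ppdist T -> forall n : nat, n.-tuple T -> R) :=
  pp_consistent P S /\
  forall a Q, P a -> P Q ->
    pp_expect Q (fun n y => (S a n y)%:E) = pp_expect Q (fun n y => (S Q n y)%:E) ->
    same_law a Q.

Definition Fk d (T : measurableType d) (P : set (ppdist T)) (k : nat) :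
  set (probability (k.-tuple T) R) := [set Pi | exists2 Q, P Q & Pi = pp_pts Q k].

Definition F0 d (T : measurableType d) (P : set (ppdist T)) :
  set (probability nat R) := [set p | exists2 Q, P Q & p = pp_count Q].

Definition pp_score d (T : measurableType d)
    (Sk : forall k : nat, probability (k.-tuple T) R -> k.-tuple T -> R)
    (S0 : probability nat R -> nat -> R)
    (Q : ppdist T) (n : nat) (y : n.-tuple T) : R :=
  ((if n is 0 then 0 else Sk n (pp_pts Q n) y) + S0 (pp_count Q) n)%R.

End ScoringDefs.
Arguments Fk {R d T} P k.

(* Conditioning on the number n of points, the expected score of a forecast a
   under Q is E_{p^Q}[S_0(p^a, n)] plus the p^Q-average over n of the expected
   score of Pi_n^a under Pi_n^Q.  Consistency of S_0 and of each S_n minimises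
   both parts at a = Q.  If the totals agree, both parts agree; the first then
   gives p^a = p^Q, and in the second the nonnegative gap between the n-th
   expected scores must vanish at every atom with p_n^Q > 0, which gives
   Pi_n^a = Pi_n^Q there. *)

From HB Require Import structures.
From mathcomp Require Import all_boot all_order all_algebra all_fingroup.
From mathcomp Require Import all_classical all_reals all_analysis measurable_realfun.
From mathcomp Require Import lra.
Import Order.TTheory GRing.Theory Num.Theory.
Local Open Scope classical_set_scope.
Local Open Scope ring_scope.
Local Open Scope ereal_scope.

Set Implicit Arguments.
Unset Strict Implicit.

Lemma fin_num_leeD_eq {R : realDomainType} (x1 x2 y1 y2 : \bar R) :
  x1 \is a fin_num -> x2 \is a fin_num -> y1 \is a fin_num -> y2 \is a fin_num ->
  x1 <= y1 -> x2 <= y2 -> x1 + x2 = y1 + y2 -> x1 = y1 /\ x2 = y2.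
Proof.
case: x1 x2 y1 y2 => // r1 [] // r2 [] // s1 [] // s2 _ _ _ _.
by rewrite !lee_fin => le1 le2 [e]; split; congr EFin; lra.
Qed.

Lemma integral_cst_probability {R : realType} d (T : measurableType d)
  (mu : probability T R) (r : R) : \int[mu]_x r%:E = r%:E.
Proof.
rewrite integral_cst //; set m := (X in _ * X).
have -> : m = 1 by exact: probability_setT.
exact: mule1.
Qed.

Section atoms.
Context {R : realType} {d} {T : measurableType d} (mu : {measure set T -> \bar R}).

Lemma integral_atom (f : T -> \bar R) x : measurable [set x] ->
  \int[mu]_(y in [set x]) f y = mu [set x] * f x.
Proof.
move=> mx; rewrite (eq_integral (fun=> f x)); last by move=> y /set_mem ->.
by rewrite integral_cst // muleC.
Qed.

Lemma le_integral_eq_atom (f g : T -> R) x :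
  measurable [set x] -> 0 < mu [set x] ->
  mu.-integrable setT (EFin \o f) -> mu.-integrable setT (EFin \o g) ->
  (forall y, (f y <= g y)%R) -> \int[mu]_y (f y)%:E = \int[mu]_y (g y)%:E ->
  f x = g x.
Proof.
move=> mx mux fi gi le_fg eq_fg.
have int_gf0 : \int[mu]_y ((g y - f y)%R)%:E = 0.
  under eq_integral do rewrite EFinB.
  by rewrite integralB_EFin // eq_fg subee // (integrable_fin_num _ gi).
have : mu [set x] * ((g x - f x)%R)%:E <= 0.
  rewrite -(integral_atom (fun y => ((g y - f y)%R)%:E)) // -int_gf0.
  apply: ge0_subset_integral => //.
    exact: measurable_int (integrableB measurableT gi fi).
  by move=> y _; rewrite lee_fin subr_ge0.
rewrite pmule_rle0 // lee_fin => ge_fg.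
by have := le_fg x; lra.
Qed.

End atoms.

Section nat_measure.
Context {R : realType} (mu : {measure set nat -> \bar R}).

Let setT_nat : [set: nat] = \bigcup_n [set n].
Proof. by apply/seteqP; split => [n _|n]; [exists n|]. Qed.

Let trivIset_nat : trivIset [set: nat] (fun n => [set n]).
Proof. by move=> i j _ _ [x [/= -> ->]]. Qed.

Lemma integral_nat (f : nat -> \bar R) : mu.-integrable setT f ->
  \int[mu]_n f n = \sum_(n <oo) mu [set n] * f n.
Proof.
move=> fi; rewrite setT_nat integral_bigcup //; last by rewrite -setT_nat.
by apply: eq_eseriesr => n _; rewrite integral_atom.
Qed.

Lemma ge0_integral_nat (f : nat -> \bar R) : (forall n, 0 <= f n) ->
  \int[mu]_n f n = \sum_(n <oo) mu [set n] * f n.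
Proof.
move=> f0; rewrite setT_nat ge0_integral_bigcup //.
by apply: eq_eseriesr => n _; rewrite integral_atom.
Qed.

End nat_measure.

Unset Implicit Arguments.

Section pp_score_expectation.
Context {R : realType} {d} {T : measurableType d}.
Variables (P : set (@ppdist R _ T))
  (Sk : forall k : nat, probability (k.-tuple T) R -> k.-tuple T -> R)
  (S0 : probability nat R -> nat -> R).
Hypothesis S_scoring : pp_scoring P (pp_score Sk S0).
Hypothesis Sk_consistent : forall k, (0 < k)%N -> consistent (Fk P k) (Sk k).
Hypothesis S0_consistent : consistent (F0 P) S0.
Variable Q : @ppdist R _ T.
Hypothesis PQ : P Q.

Let S : @ppdist R _ T -> forall n, n.-tuple T -> R := pp_score Sk S0.

Definition pts_mean_score (a : @ppdist R _ T) (n : nat) : R :=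
  if n is 0 then 0%R else fine (\int[pp_pts Q n]_y (Sk n (pp_pts a n) y)%:E).

Lemma Sk_integrable a n : P a -> (0 < n)%N ->
  (pp_pts Q n).-integrable setT (fun y => (Sk n (pp_pts a n) y)%:E).
Proof. by move=> Pa n_gt0; apply: (Sk_consistent _ n_gt0).1; [exists a|exists Q]. Qed.

Lemma pts_mean_scoreE a n : P a -> (0 < n)%N ->
  (pts_mean_score a n)%:E = \int[pp_pts Q n]_y (Sk n (pp_pts a n) y)%:E.
Proof.
move=> Pa; case: n => // n n_gt0.
by rewrite fineK //; exact/integrable_fin_num/Sk_integrable.
Qed.

Lemma integral_pp_score a n : P a ->
  \int[pp_pts Q n]_y (S a n y)%:E = (pts_mean_score a n + S0 (pp_count a) n)%:E.
Proof.
move=> Pa; case: n => [|n].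
  by rewrite /S /pp_score /=; exact: integral_cst_probability.
under eq_integral do rewrite /S /pp_score EFinD.
rewrite integralD //; last 2 first.
- exact: Sk_integrable.
- exact: finite_measure_integrable_cst.
by rewrite integral_cst_probability EFinD pts_mean_scoreE.
Qed.

Lemma mean_pp_score_integrable a : P a ->
  (pp_count Q).-integrable setT (fun n => (pts_mean_score a n + S0 (pp_count a) n)%:E).
Proof.
move=> Pa; apply/integrableP; split => //; rewrite ge0_integral_nat //.
have [S_meas] := S_scoring _ _ Pa PQ; apply: le_lt_trans.
apply: lee_nneseries => n _; first by rewrite mule_ge0.
apply: lee_wpmul2l => //; rewrite -integral_pp_score //.
exact: le_abse_integral (S_meas n).
Qed.

Lemma S0_integrable a : P a ->
  (pp_count Q).-integrable setT (fun n => (S0 (pp_count a) n)%:E).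
Proof. by move=> Pa; apply: S0_consistent.1; [exists a|exists Q]. Qed.

Lemma pts_mean_score_integrable a : P a ->
  (pp_count Q).-integrable setT (fun n => (pts_mean_score a n)%:E).
Proof.
move=> Pa; have := integrableB measurableT (mean_pp_score_integrable _ Pa) (S0_integrable _ Pa).
by apply: eq_integrable => // n _; rewrite /= -EFinB addrK.
Qed.

Lemma pp_expect_scoreE a : P a ->
  pp_expect Q (fun n y => (S a n y)%:E) =
  \int[pp_count Q]_n (pts_mean_score a n)%:E + \int[pp_count Q]_n (S0 (pp_count a) n)%:E.
Proof.
move=> Pa; rewrite -integralD //; last 2 first.
- exact: pts_mean_score_integrable.
- exact: S0_integrable.
under [RHS]eq_integral do rewrite -EFinD.
rewrite integral_nat; last exact: mean_pp_score_integrable.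
by apply: eq_eseriesr => n _; rewrite /pp_term integral_pp_score.
Qed.

Lemma pts_mean_score_le a n : P a -> (pts_mean_score Q n <= pts_mean_score a n)%R.
Proof.
move=> Pa; case: n => [|n] //.
rewrite -lee_fin !pts_mean_scoreE //.
by apply: (Sk_consistent _ (ltn0Sn n)).2; [exists a|exists Q].
Qed.

Lemma pp_expect_score_le a : P a ->
  pp_expect Q (fun n y => (S Q n y)%:E) <= pp_expect Q (fun n y => (S a n y)%:E).
Proof.
move=> Pa; rewrite !pp_expect_scoreE //; apply: leeD.
- apply: le_integral => //; [exact: pts_mean_score_integrable..|].
  by move=> n _; rewrite lee_fin pts_mean_score_le.
- by apply: S0_consistent.2; [exists a|exists Q].
Qed.

Section strict.
Hypothesis Sk_strict : forall k, (0 < k)%N -> strictly_consistent (Fk P k) (Sk k).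
Hypothesis S0_strict : strictly_consistent (F0 P) S0.

Lemma pp_expect_score_eq a : P a ->
  pp_expect Q (fun n y => (S a n y)%:E) = pp_expect Q (fun n y => (S Q n y)%:E) ->
  same_law a Q.
Proof.
move=> Pa; rewrite !pp_expect_scoreE // => eq_expect.
have fin_pts b (Pb : P b) := integrable_fin_num measurableT (pts_mean_score_integrable b Pb).
have fin_count b (Pb : P b) := integrable_fin_num measurableT (S0_integrable b Pb).
have le_pts := le_integral measurableT (pts_mean_score_integrable _ PQ)
  (pts_mean_score_integrable _ Pa) (fun n _ => pts_mean_score_le _ n Pa).
have le_count : \int[pp_count Q]_n (S0 (pp_count Q) n)%:E <=
                \int[pp_count Q]_n (S0 (pp_count a) n)%:E.
  by apply: S0_consistent.2; [exists a|exists Q].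
have [eq_pts eq_count] := fin_num_leeD_eq (fin_pts _ PQ) (fin_count _ PQ)
  (fin_pts _ Pa) (fin_count _ Pa) le_pts le_count (esym eq_expect).
have count_aQ : pp_count a = pp_count Q.
  by apply: (S0_strict.2 _ _ _ _ (esym eq_count)); [exists a|exists Q].
split => // k k_gt0; rewrite count_aQ => pk_gt0.
have mk : measurable [set k] by [].
have : (pts_mean_score Q k)%:E = (pts_mean_score a k)%:E.
  congr EFin; apply: (le_integral_eq_atom mk pk_gt0) eq_pts.
  - exact: pts_mean_score_integrable.
  - exact: pts_mean_score_integrable.
  - by move=> n; apply: pts_mean_score_le.
rewrite !pts_mean_scoreE // => eq_k.
by apply: (Sk_strict _ k_gt0).2 (esym eq_k); [exists a|exists Q].
Qed.

End strict.

End pp_score_expectation.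

Section pp_score_consistency.
Context {R : realType} {d} {T : measurableType d}.
Variables (P : set (@ppdist R _ T))
  (Sk : forall k : nat, probability (k.-tuple T) R -> k.-tuple T -> R)
  (S0 : probability nat R -> nat -> R).
Hypothesis S_scoring : pp_scoring P (pp_score Sk S0).

Lemma pp_score_consistent :
  (forall k, (0 < k)%N -> consistent (Fk P k) (Sk k)) -> consistent (F0 P) S0 ->
  pp_consistent P (pp_score Sk S0).
Proof.
move=> Sk_cons S0_cons; split => // a Q Pa PQ.
exact: pp_expect_score_le S_scoring Sk_cons S0_cons _ PQ _ Pa.
Qed.

Lemma pp_score_strictly_consistent :
  (forall k, (0 < k)%N -> strictly_consistent (Fk P k) (Sk k)) ->
  strictly_consistent (F0 P) S0 ->
  pp_strictly_consistent P (pp_score Sk S0).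
Proof.
move=> Sk_strict S0_strict.
have Sk_cons k (k_gt0 : (0 < k)%N) := (Sk_strict k k_gt0).1.
split; first exact: pp_score_consistent Sk_cons S0_strict.1.
move=> a Q Pa PQ.
exact: pp_expect_score_eq S_scoring Sk_cons S0_strict.1 _ PQ Sk_strict S0_strict _ Pa.
Qed.

End pp_score_consistency.

Local Close Scope ereal_scope.

Theorem proposition3p4 (R : realType) (dim : nat)
    (X : set (dim.-tuple R))
    (P : set (@ppdist R _ (dim.-tuple R)))
    (Sk : forall k : nat,
        probability (k.-tuple (dim.-tuple R)) R -> k.-tuple (dim.-tuple R) -> R)
    (S0 : probability nat R -> nat -> R) :
  measurable X ->
  (forall Q, P Q -> pp_on X Q) ->
  (forall k : nat, (0 < k)%N -> symmetric_score (Sk k)) ->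
  (* S : P x M_0 -> R, defined from S_0 and the S_k, is a scoring function,
     i.e. S(a, .) is integrable under every Q in P *)
  pp_scoring P (pp_score Sk S0) ->
  ((forall k : nat, (0 < k)%N -> consistent (Fk P k) (Sk k)) ->
   consistent (F0 P) S0 ->
   pp_consistent P (pp_score Sk S0)) /\
  ((forall k : nat, (0 < k)%N -> strictly_consistent (Fk P k) (Sk k)) ->
   strictly_consistent (F0 P) S0 ->
   pp_strictly_consistent P (pp_score Sk S0)).
Proof.
move=> _ _ _ S_scoring.
by split; [exact: pp_score_consistent | exact: pp_score_strictly_consistent].
Qed.
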